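(* Let $\mathfrak{g}$ be a $2$-dimensional non-abelian complex Lie algebra. Then every completion of the universal enveloping algebra $U(\mathfrak{g})$ with respect to a submultiplicative prenorm is a PI-algebra.
   Context: A submultiplicative prenorm on $U(\mathfrak{g})$ is a seminorm $p$ with $p(ab)\le p(a)p(b)$; the completion is the Banach algebra obtained by completing $U(\mathfrak{g})/\{a:p(a)=0\}$. An associative algebra is a PI-algebra if there is a nonzero non-commutative polynomial $p$ in finitely many variables with $p(a_1,\ldots,a_n)=0$ for all elements $a_i$ of the algebra. *)

From HB Require Import structures.
From mathcomp Require Import all_boot all_order all_algebra.
From mathcomp Require Import reals.
From mathcomp Require Import complex.
From mathcomp Require Import finmap monalg.

Set Implicit Arguments.
Unset Strict Implicit.
Unset Printing Implicit Defensive.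

Import Order.TTheory GRing.Theory Num.Theory.
Local Open Scope ring_scope.

Definition cabs (R : realType) (z : R[i]) : R := ComplexField.Normc.normc z.

(* Free associative unital C-algebra C<X_0,...,X_{n-1}> (noncommutative
   polynomials in n variables): the monoid algebra of the free monoid on 'I_n. *)
Definition ncpoly (R : realType) (n : nat) := {malg R[i][{fmonom 'I_n}]}.

Definition ncvar (R : realType) (n : nat) (j : 'I_n) : ncpoly R n :=
  << fmu j >>.

Definition nceval (R : realType) (n : nat) (A : lalgType R[i])
    (P : ncpoly R n) (a : 'I_n -> A) : A :=
  \sum_(w <- msupp P) P@_w *: \prod_(j <- (w : seq 'I_n)) a j.

(* A 2-dimensional complex Lie algebra g with basis e0, e1 is determined by
   [e0, e1] = a e0 + b e1 (antisymmetry and Jacobi are automatic in dim 2);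
   g is non-abelian iff (a, b) <> (0, 0).
   U(g) = T(g) / (x y - y x - [x,y]) = C<X0,X1> / I(a,b), where I(a,b) is the
   two-sided ideal generated by the relator below. *)
Definition env_rel (R : realType) (a b : R[i]) : ncpoly R 2 :=
  ncvar R ord0 * ncvar R ord_max - ncvar R ord_max * ncvar R ord0
  - (a *: ncvar R ord0 + b *: ncvar R ord_max).

Inductive env_ideal (R : realType) (a b : R[i]) : ncpoly R 2 -> Prop :=
  | env_ideal_gen (u v : ncpoly R 2) : env_ideal a b (u * env_rel a b * v)
  | env_ideal_0 : env_ideal a b 0
  | env_ideal_add x y : env_ideal a b x -> env_ideal a b y -> env_ideal a b (x + y)
  | env_ideal_scale (c : R[i]) x : env_ideal a b x -> env_ideal a b (c *: x).

Definition submult_prenorm (R : realType) (A : lalgType R[i]) (p : A -> R) :=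
  [/\ forall x y : A, p (x + y) <= p x + p y,
      forall (c : R[i]) (x : A), p (c *: x) = cabs c * p x &
      forall x y : A, p (x * y) <= p x * p y].

(* A submultiplicative prenorm on U(g) = C<X0,X1>/I(a,b), presented through
   its lift p to C<X0,X1> (p is a submultiplicative seminorm vanishing on
   I(a,b); such lifts correspond bijectively to prenorms on the quotient). *)
Definition env_prenorm (R : realType) (a b : R[i]) (p : ncpoly R 2 -> R) :=
  submult_prenorm p /\ forall x, env_ideal a b x -> p x = 0.

Definition p_cauchy (R : realType) (A : lalgType R[i]) (p : A -> R)
    (u : nat -> A) :=
  forall e : R, 0 < e -> exists N : nat,
    forall m k : nat, (N <= m)%N -> (N <= k)%N -> p (u m - u k) < e.

Definition p_null (R : realType) (A : lalgType R[i]) (p : A -> R)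
    (u : nat -> A) :=
  forall e : R, 0 < e -> exists N : nat, forall k : nat, (N <= k)%N -> p (u k) < e.

(* The completion of A / {p = 0} is the algebra of p-Cauchy sequences in A
   modulo p-null sequences, with termwise operations.  Hence a noncommutative
   polynomial P vanishes identically on the completion iff for all
   p-Cauchy sequences u_0, ..., u_{n-1} the sequence P(u_0 k, ..., u_{n-1} k)
   is p-null.  The completion is a PI-algebra iff some nonzero P does so. *)
Definition completion_is_PI (R : realType) (A : lalgType R[i]) (p : A -> R) :=
  exists (n : nat) (P : ncpoly R n), P != 0 /\
    forall u : 'I_n -> nat -> A, (forall j, p_cauchy p (u j)) ->
      p_null p (fun k => nceval P (fun j => u j k)).

(* In U(g) with [X0, X1] = y := a X0 + b X1 <> 0, the element y is normal
   (y U = U y) and generates the derived ideal, so every [u, v]^K lies in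
   U y^K.  Taking x with [x, y] = y gives [x, y^k] = k y^k, hence
   k p(y^k) <= 2 p(x) p(y^k), and p(y^k) = 0 as soon as k > 2 p(x).  So the
   polynomial [X0, X1]^K vanishes on U(g) modulo the kernel of p, hence on
   the completion; it is nonzero since [E12, E21] squares to 1 in 2x2
   matrices. *)

From HB Require Import structures.
From mathcomp Require Import all_boot all_order all_algebra.
From mathcomp Require Import reals complex finmap monalg.
From mathcomp Require Import lra.

Set Implicit Arguments.
Unset Strict Implicit.
Unset Printing Implicit Defensive.

Import Order.TTheory GRing.Theory Num.Theory.
Local Open Scope ring_scope.

Definition bracket (A : pzRingType) (x y : A) := x * y - y * x.

Section Bracket.
Variables (K : pzRingType) (A : algType K).
Implicit Types (x y z : A) (c : K).

Lemma bracketxx x : bracket x x = 0.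
Proof. exact: subrr. Qed.

Lemma bracketC x y : bracket x y = - bracket y x.
Proof. by rewrite /bracket opprB. Qed.

Lemma bracket1l x : bracket 1 x = 0.
Proof. by rewrite /bracket mul1r mulr1 subrr. Qed.

Lemma bracketDl x y z : bracket (x + y) z = bracket x z + bracket y z.
Proof. by rewrite /bracket mulrDl mulrDr opprD addrACA. Qed.

Lemma bracketDr x y z : bracket x (y + z) = bracket x y + bracket x z.
Proof. by rewrite bracketC bracketDl opprD -!bracketC. Qed.

Lemma bracketZl c x y : bracket (c *: x) y = c *: bracket x y.
Proof. by rewrite /bracket -scalerAl -scalerAr scalerBr. Qed.

Lemma bracketZr c x y : bracket x (c *: y) = c *: bracket x y.
Proof. by rewrite bracketC bracketZl -scalerN -bracketC. Qed.

Lemma bracketMl x y z : bracket (x * y) z = x * bracket y z + bracket x z * y.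
Proof. by rewrite /bracket mulrBr mulrBl !mulrA addrA subrK. Qed.

Lemma bracketMr x y z : bracket x (y * z) = bracket x y * z + y * bracket x z.
Proof. by rewrite /bracket mulrBr mulrBl !mulrA addrA subrK. Qed.

Lemma bracketMrB x y z u v :
  bracket x (y * z) - (u * z + y * v) = (bracket x y - u) * z + y * (bracket x z - v).
Proof. by rewrite mulrBl mulrBr bracketMr opprD addrACA. Qed.

End Bracket.

Definition alg_generated (K : pzRingType) (A : lalgType K) (G : A -> Prop) :=
  forall Q : A -> Prop, Q 1 -> (forall g, G g -> Q g) ->
    (forall u v, Q u -> Q v -> Q (u + v)) ->
    (forall c u, Q u -> Q (c *: u)) ->
    (forall u v, Q u -> Q v -> Q (u * v)) ->
  forall z, Q z.

Section BracketIdeal.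
Variables (K : pzRingType) (A : algType K) (I : A -> Prop).
Hypotheses (I0 : I 0) (ID : forall u v, I u -> I v -> I (u + v))
  (IZ : forall c u, I u -> I (c *: u))
  (IMl : forall u v, I v -> I (u * v)) (IMr : forall u v, I u -> I (u * v)).

Lemma ideal_bracket (G : A -> Prop) : alg_generated G ->
  (forall g h, G g -> G h -> I (bracket g h)) -> forall u v, I (bracket u v).
Proof.
move=> genA IG.
have IN u : I u -> I (- u) by rewrite -scaleN1r; apply: IZ.
have bracket_gen v : (forall g, G g -> I (bracket g v)) -> forall u, I (bracket u v).
  move=> IGv; elim/genA => [|//|u w Iu Iw|c u Iu|u w Iu Iw].
  - by rewrite bracket1l.
  - by rewrite bracketDl; apply: ID.
  - by rewrite bracketZl; apply: IZ.
  - by rewrite bracketMl; apply: ID; [apply: IMl | apply: IMr].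
have bracket_genr h u : G h -> I (bracket u h).
  by move=> Gh; apply: bracket_gen => g /IG; apply.
by move=> u v; apply: bracket_gen => g Gg; rewrite bracketC; apply/IN/bracket_genr.
Qed.

End BracketIdeal.

Section MalgAlgebra.
Variables (K : monomType) (R : comNzRingType).

Lemma malgC_central (c : R) (g : {malg R[K]}) : g * c%:MP = c%:MP * g.
Proof.
rewrite mul_malgC malgM_def malgZ_def fgmulgU /fgscale.
by apply: eq_bigr => k _; rewrite mulm1 mulrC.
Qed.

Lemma malg_scalerAr (c : R) (g1 g2 : {malg R[K]}) :
  c *: (g1 * g2) = g1 * (c *: g2).
Proof. by rewrite -!mul_malgC mulrA -malgC_central mulrA. Qed.

End MalgAlgebra.

(* monalg makes {malg R[K]} only a left algebra, and HB cannot extend that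
   instance for a noncommutative monoid K, so the algebra structure is
   declared on ncpoly itself. *)
HB.instance Definition _ (R : realType) (n : nat) :=
  GRing.Lalgebra.on (ncpoly R n).
HB.instance Definition _ (R : realType) (n : nat) :=
  GRing.Lalgebra_isAlgebra.Build R[i] (ncpoly R n) (@malg_scalerAr _ R[i]).

Section Evaluation.
Variables (R : realType) (n : nat) (A : algType R[i]) (a : 'I_n -> A).

Definition eval_monom (w : {fmonom 'I_n}) : A := \prod_(j <- (w : seq 'I_n)) a j.

Lemma eval_monom_is_mmorphism : mmorphism eval_monom.
Proof. by split=> [u v|]; rewrite /eval_monom ?fmM ?big_cat // fm1 big_nil. Qed.

HB.instance Definition _ :=
  monalg.isMultiplicative.Build _ _ eval_monom eval_monom_is_mmorphism.

Lemma ncevalE (P : ncpoly R n) : nceval P a = mmap (in_alg A) eval_monom P.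
Proof. by apply: eq_bigr => w _; rewrite /= mulr_algl. Qed.

Lemma nceval0 : nceval 0 a = 0.
Proof. by rewrite ncevalE mmap0. Qed.

Lemma ncevalB (P Q : ncpoly R n) : nceval (P - Q) a = nceval P a - nceval Q a.
Proof. by rewrite !ncevalE mmapB. Qed.

Lemma ncevalM (P Q : ncpoly R n) : nceval (P * Q) a = nceval P a * nceval Q a.
Proof.
rewrite !ncevalE; apply: (commr_mmap_is_multiplicative _).1 => P' w w'.
by rewrite /GRing.comm /= mulr_algl mulr_algr.
Qed.

Lemma ncevalX (P : ncpoly R n) k : nceval (P ^+ k) a = nceval P a ^+ k.
Proof.
elim: k => [|k IHk]; last by rewrite !exprS ncevalM IHk.
by rewrite !expr0 ncevalE mmap1.
Qed.

Lemma nceval_var j : nceval (ncvar R j) a = a j.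
Proof. by rewrite ncevalE mmapU /= scale1r mul1r /eval_monom fmU big_seq1. Qed.

Lemma nceval_bracketX i j k :
  nceval (bracket (ncvar R i) (ncvar R j) ^+ k) a = bracket (a i) (a j) ^+ k.
Proof.
rewrite ncevalX ncevalB -(nceval_var i) -(nceval_var j).
by congr ((_ - _) ^+ k); apply: ncevalM.
Qed.

End Evaluation.

Section NcpolyGenerated.
Variables (R : realType) (n : nat).

Lemma ncmonomE (w : {fmonom 'I_n}) :
  << w >> = \prod_(j <- (w : seq 'I_n)) ncvar R j :> ncpoly R n.
Proof.
rewrite -[w]fmK; elim: (w : seq 'I_n) => [|j s IHs]; first by rewrite big_nil -fmoneE.
rewrite big_cons -IHs /ncvar malgM_def fgmulUU mulr1; congr << _ >>.
by apply/eqP; rewrite fmP fmM fmU.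
Qed.

Lemma ncpoly_generated :
  alg_generated (fun P : ncpoly R n => exists j, P = ncvar R j).
Proof.
move=> Q Q1 Qvar QD QZ QM P.
have Q0 : Q 0 by rewrite -(scale0r 1); apply: QZ.
rewrite (monalgE P); apply: (big_ind Q) => // w _.
have -> : << P@_w *g w >> = P@_w *: << w >> :> ncpoly R n.
  by apply/malgP => w'; rewrite mcoeffZ !mcoeffU mulrnAr mulr1.
apply: QZ.
by rewrite ncmonomE; apply: (big_ind Q) => // j _; apply: Qvar; exists j.
Qed.

End NcpolyGenerated.

Lemma ncpoly2_generated (R : realType) :
  alg_generated (fun P : ncpoly R 2 => P = ncvar R ord0 \/ P = ncvar R ord_max).
Proof.
move=> Q Q1 Qvar QD QZ QM; apply: ncpoly_generated => // _ [[[|[|j]] lt_j2] ->] //.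
- by apply: Qvar; left; congr ncvar; apply: val_inj.
- by apply: Qvar; right; congr ncvar; apply: val_inj.
Qed.

Lemma bracket_delta_mx_sqr (K : comNzRingType) :
  bracket (delta_mx 0 1) (delta_mx 1 0) ^+ 2 = 1 :> 'M[K]_2.
Proof.
rewrite /bracket /GRing.mul /= !mul_delta_mx expr2 mulrBl !mulrBr.
rewrite /GRing.mul /= !mul_delta_mx !mul_delta_mx_0 // subr0 sub0r opprK.
apply/matrixP => i j; rewrite !mxE.
by case: i => [[|[|?]] ?]; case: j => [[|[|?]] ?]; rewrite ?addr0 ?add0r.
Qed.

Lemma ncbracketX_neq0 (R : realType) k :
  bracket (ncvar R (ord0 : 'I_2)) (ncvar R ord_max) ^+ k != 0.
Proof.
pose m (j : 'I_2) : 'M[R[i]]_2 := if j == ord0 then delta_mx 0 1 else delta_mx 1 0.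
have mE : nceval (bracket (ncvar R ord0) (ncvar R ord_max) ^+ k) m =
    bracket (delta_mx 0 1) (delta_mx 1 0) ^+ k by rewrite nceval_bracketX.
apply: contra_neq (@oner_neq0 'M[R[i]]_2) => P0.
rewrite -(expr1n _ k) -(bracket_delta_mx_sqr R[i]) -exprM mulnC exprM.
by rewrite -mE P0 nceval0 expr0n.
Qed.

Section Prenorm.
Variables (R : realType) (A : lalgType R[i]) (p : A -> R).
Hypothesis p_prenorm : submult_prenorm p.

Lemma prenormD x y : p (x + y) <= p x + p y.
Proof. by case: p_prenorm. Qed.

Lemma prenormZ c x : p (c *: x) = cabs c * p x.
Proof. by case: p_prenorm. Qed.

Lemma prenormM x y : p (x * y) <= p x * p y.
Proof. by case: p_prenorm. Qed.

Lemma prenorm0 : p 0 = 0.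
Proof. by rewrite -(scale0r (0 : A)) prenormZ /cabs ComplexField.Normc.normc0 mul0r. Qed.

Lemma prenormN x : p (- x) = p x.
Proof. by rewrite -scaleN1r prenormZ /cabs normcN ComplexField.Normc.normc1 mul1r. Qed.

Lemma prenorm_ge0 x : 0 <= p x.
Proof. by have := prenormD x (- x); rewrite prenormN subrr prenorm0; lra. Qed.

Lemma prenormMn x k : p (k%:R *: x) = k%:R * p x.
Proof. by rewrite prenormZ /cabs normcMn ComplexField.Normc.normc1. Qed.

Lemma prenorm_eq0D x y : p x = 0 -> p y = 0 -> p (x + y) = 0.
Proof.
move=> px py; apply/eqP; rewrite eq_le prenorm_ge0 andbT.
by have := prenormD x y; rewrite px py addr0.
Qed.

Lemma prenorm_eq0Z c x : p x = 0 -> p (c *: x) = 0.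
Proof. by rewrite prenormZ => ->; rewrite mulr0. Qed.

Lemma prenorm_eq0Ml u x : p x = 0 -> p (u * x) = 0.
Proof.
move=> px; apply/eqP; rewrite eq_le prenorm_ge0 andbT.
by have := prenormM u x; rewrite px mulr0.
Qed.

Lemma prenorm_eq0Mr u x : p x = 0 -> p (x * u) = 0.
Proof.
move=> px; apply/eqP; rewrite eq_le prenorm_ge0 andbT.
by have := prenormM x u; rewrite px mul0r.
Qed.

Lemma prenorm_eq0_le x y : p (x - y) = 0 -> p x <= p y.
Proof. by move=> pxy; have := prenormD (x - y) y; rewrite subrK pxy add0r. Qed.

End Prenorm.

Section SolvableQuotient.
Variables (R : realType) (A : algType R[i]) (p : A -> R) (X0 X1 : A) (a b : R[i]).
Hypotheses (p_prenorm : submult_prenorm p)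
  (genX : alg_generated (fun z => z = X0 \/ z = X1)).

Let c := bracket X0 X1.
Let y := a *: X0 + b *: X1.
Hypothesis p_rel : p (c - y) = 0.

Let p0 : p 0 = 0 := prenorm0 p_prenorm.
Let eq0D := prenorm_eq0D p_prenorm.
Let eq0Z := prenorm_eq0Z p_prenorm.
Let eq0Ml := prenorm_eq0Ml p_prenorm.
Let eq0Mr := prenorm_eq0Mr p_prenorm.

Definition in_Ayk k z := exists w, p (z - w * y ^+ k) = 0.

Lemma in_Ayk_eq0 k z : p z = 0 -> in_Ayk k z.
Proof. by exists 0; rewrite mul0r subr0. Qed.

Lemma in_AykD k u v : in_Ayk k u -> in_Ayk k v -> in_Ayk k (u + v).
Proof.
by move=> [w1 h1] [w2 h2]; exists (w1 + w2); rewrite mulrDl opprD addrACA; apply: eq0D.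
Qed.

Lemma in_AykZ k s u : in_Ayk k u -> in_Ayk k (s *: u).
Proof. by move=> [w h]; exists (s *: w); rewrite -scalerAl -scalerBr; apply: eq0Z. Qed.

Lemma in_AykMl k u v : in_Ayk k v -> in_Ayk k (u * v).
Proof. by move=> [w h]; exists (u * w); rewrite -mulrA -mulrBr; apply: eq0Ml. Qed.

Lemma in_Ayk_congr k z z' : p (z - z') = 0 -> in_Ayk k z' -> in_Ayk k z.
Proof.
move=> hz [w h]; exists w.
by rewrite -[z](subrK z') -addrA; apply: eq0D.
Qed.

Lemma in_Ayk_mulr_ypow j k z : in_Ayk j z -> in_Ayk (j + k) (z * y ^+ k).
Proof. by move=> [w h]; exists w; rewrite exprD mulrA -mulrBl; apply: eq0Mr. Qed.

Lemma bracket_X0y : bracket X0 y = b *: c.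
Proof. by rewrite bracketDr !bracketZr bracketxx scaler0 add0r. Qed.

Lemma bracket_X1y : bracket X1 y = - a *: c.
Proof.
by rewrite bracketDr !bracketZr bracketxx scaler0 addr0 bracketC scalerN scaleNr.
Qed.

Lemma y_normal z : in_Ayk 1 (y * z).
Proof.
have gen_case s g : bracket g y = s *: c -> in_Ayk 1 (y * g).
  move=> hg; exists (g - s%:A).
  have -> : y * g - (g - s%:A) * y ^+ 1 = s *: (y - c).
    by rewrite expr1 mulrBl mulr_algl scalerBr -hg /bracket !opprB addrA addrAC addrC.
  by apply: eq0Z; rewrite -opprB prenormN.
move: z; apply: genX => [|g [->|->]|u v hu hv|s u hu|u v [u' hu] hv].
- by exists 1; rewrite mulr1 mul1r expr1 subrr p0.
- by apply: gen_case b _ bracket_X0y.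
- by apply: gen_case (- a) _ bracket_X1y.
- by rewrite mulrDr; apply: in_AykD.
- by rewrite -scalerAr; apply: in_AykZ.
- apply: (in_Ayk_congr (z' := u' * (y * v))); last exact: in_AykMl.
  by rewrite !mulrA -mulrBl; apply: eq0Mr.
Qed.

Lemma ypow_normal k z : in_Ayk k (y ^+ k * z).
Proof.
elim: k z => [|k IHk] z.
  by exists z; rewrite expr0 mul1r mulr1 subrr p0.
have [z1 hz1] := y_normal z.
apply: (in_Ayk_congr (z' := y ^+ k * z1 * y ^+ 1)).
  by rewrite exprSr -mulrA -mulrA -mulrBr; apply: eq0Ml.
by rewrite -addn1; apply/in_Ayk_mulr_ypow/IHk.
Qed.

Lemma in_AykM j k u v : in_Ayk j u -> in_Ayk k v -> in_Ayk (j + k) (u * v).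
Proof.
move=> [w1 h1] [w2 h2].
apply: (in_Ayk_congr (z' := w1 * (y ^+ j * v))).
  by rewrite mulrA -mulrBl; apply: eq0Mr.
apply: in_AykMl; apply: (in_Ayk_congr (z' := y ^+ j * w2 * y ^+ k)).
  by rewrite -mulrA -mulrBr; apply: eq0Ml.
exact/in_Ayk_mulr_ypow/ypow_normal.
Qed.

Lemma in_AykMr k u v : in_Ayk k u -> in_Ayk k (u * v).
Proof.
move=> hu; rewrite -[k]addn0; apply: in_AykM => //.
by exists v; rewrite expr0 mulr1 subrr p0.
Qed.

Lemma in_AykX k u : in_Ayk 1 u -> in_Ayk k (u ^+ k).
Proof.
move=> hu; elim: k => [|k IHk].
  by exists 1; rewrite !expr0 mul1r subrr p0.
by rewrite exprSr -addn1; apply: in_AykM.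
Qed.

Lemma in_Ay_bracket u v : in_Ayk 1 (bracket u v).
Proof.
have hc : in_Ayk 1 c by exists 1; rewrite mul1r expr1.
have hN z : in_Ayk 1 z -> in_Ayk 1 (- z) by rewrite -scaleN1r; apply: in_AykZ.
apply: (ideal_bracket _ (@in_AykD 1) (@in_AykZ 1) (@in_AykMl 1) (@in_AykMr 1) genX).
  exact/in_Ayk_eq0/p0.
move=> g h [->|->] [->|->]; rewrite ?bracketxx; try exact/in_Ayk_eq0/p0.
  exact: hc.
by rewrite bracketC; apply: hN.
Qed.

Hypothesis ab_neq0 : (a, b) != (0, 0).

Lemma exists_bracket_eq_y : exists x, p (bracket x y - y) = 0.
Proof.
have [b0|bn0] := eqVneq b 0.
  have an0 : a != 0 by apply: contraNneq ab_neq0 => ->; rewrite b0.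
  exists (- a^-1 *: X1).
  by rewrite bracketZl bracket_X1y scalerA mulrNN mulVf // scale1r.
by exists (b^-1 *: X0); rewrite bracketZl bracket_X0y scalerA mulVf // scale1r.
Qed.

Lemma bracket_ypow x k :
  p (bracket x y - y) = 0 -> p (bracket x (y ^+ k) - k%:R *: y ^+ k) = 0.
Proof.
move=> hx; elim: k => [|k IHk].
  by rewrite expr0 bracketC bracket1l oppr0 scale0r subr0 p0.
have -> : k.+1%:R *: y ^+ k.+1 = k%:R *: y ^+ k * y + y ^+ k * y.
  by rewrite exprSr -scalerAl mulrSr scalerDl scale1r.
by rewrite exprSr bracketMrB; apply: eq0D; [apply: eq0Mr | apply: eq0Ml].
Qed.

Lemma ypow_null x k : p (bracket x y - y) = 0 -> 2 * p x < k%:R -> p (y ^+ k) = 0.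
Proof.
move=> hx hk.
have upper : k%:R * p (y ^+ k) <= 2 * p x * p (y ^+ k).
  rewrite -(prenormMn p_prenorm); apply: le_trans (_ : p (bracket x (y ^+ k)) <= _).
    by apply: (prenorm_eq0_le p_prenorm); rewrite -opprB prenormN // bracket_ypow.
  apply: le_trans (prenormD p_prenorm _ _) _; rewrite prenormN //.
  by have := prenormM p_prenorm x (y ^+ k); have := prenormM p_prenorm (y ^+ k) x; lra.
by have := prenorm_ge0 p_prenorm (y ^+ k); have := prenorm_ge0 p_prenorm x; nra.
Qed.

Lemma bracketX_null : exists K, forall u v, p (bracket u v ^+ K) = 0.
Proof.
have [x hx] := exists_bracket_eq_y.
have px_ge0 := prenorm_ge0 p_prenorm x.
exists (Num.bound (2 * p x)) => u v.
have [w hw] := in_AykX (Num.bound (2 * p x)) (in_Ay_bracket u v).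
apply/eqP; rewrite eq_le prenorm_ge0 // andbT.
apply: le_trans (prenorm_eq0_le p_prenorm hw) _.
rewrite (prenorm_eq0Ml p_prenorm) ?(ypow_null hx) //.
by apply: archi_boundP; lra.
Qed.

End SolvableQuotient.

Theorem proposition3 (R : realType) (a b : R[i]) (p : ncpoly R 2 -> R) :
  (a, b) != (0, 0) ->
  env_prenorm a b p ->
  completion_is_PI p.
Proof.
move=> ab_neq0 [p_prenorm p_ideal].
have p_rel := p_ideal _ (env_ideal_gen a b 1 1); rewrite mulr1 mul1r in p_rel.
have [K pK] :=
  bracketX_null (A := ncpoly R 2) p_prenorm (@ncpoly2_generated R) p_rel ab_neq0.
exists 2%N, (bracket (ncvar R ord0) (ncvar R ord_max) ^+ K).
split=> [|u _ e e_gt0]; first exact: ncbracketX_neq0.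
by exists 0%N => k _; rewrite nceval_bracketX pK.
Qed.
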